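(* Let $d\ge3$, $h\ge1$, and let $\mathbf{x}_0$ be the standard basis vector of $\mathbb{Z}^V$ corresponding to the root $0$. Then the order of the image $\bar{\mathbf{x}}_0$ of $\mathbf{x}_0$ in $G(d,h)$ is $d(d-1)^h$.
   Context: Let $\mathcal{T}(d,h)$ be the rooted tree in which the root $0$ has $d$ children, every vertex at distance $1,\dots,h-1$ from the root has $d-1$ children, and the vertices at distance $h$ are leaves. Let $V$ be its vertex set, $A$ its adjacency matrix, $\Delta := dI-A$, and $\Lambda\subset\mathbb{Z}^V$ the lattice spanned by the rows of $\Delta$. Then $G(d,h):=\mathbb{Z}^V/\Lambda$; for $\mathbf{v}\in\mathbb{Z}^V$, $\bar{\mathbf{v}}$ denotes its image in $G(d,h)$. $\{\mathbf{x}_i:i\in V\}$ is the standard basis of $\mathbb{Z}^V$. *)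

From HB Require Import structures.
From mathcomp Require Import all_boot all_order all_algebra.
Set Implicit Arguments. Unset Strict Implicit. Unset Printing Implicit Defensive.
Import Order.TTheory GRing.Theory Num.Theory.
Local Open Scope ring_scope.

(* A vertex of T(d,h) is encoded by the path of child-indices from the root:
   the root is [::]; a vertex at depth k >= 1 is a list [a1; ...; ak] with
   a1 < d (the root has d children) and a2,...,ak < d-1 (every other
   non-leaf vertex has d-1 children), k <= h. *)

Fixpoint tpaths (c k : nat) : seq (seq nat) :=
  if k is k'.+1 then [::] :: [seq a :: s | a <- iota 0 c, s <- tpaths c k']
  else [:: [::]].

Definition tree_vertices (d h : nat) : seq (seq nat) :=
  [::] :: (if h is h'.+1 then [seq a :: s | a <- iota 0 d, s <- tpaths d.-1 h']
           else [::]).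

Definition tvert (d h : nat) : finType := seq_sub (tree_vertices d h).

Definition troot (d h : nat) : tvert d h :=
  SeqSub (mem_head ([::] : seq nat) _).

Definition tparent (s t : seq nat) : bool :=
  (size t == (size s).+1) && (take (size s) t == s).
Definition tadj d h (u v : tvert d h) : bool :=
  tparent (ssval u) (ssval v) || tparent (ssval v) (ssval u).

Definition tDelta d h (u v : tvert d h) : int :=
  (d%:Z * (u == v)%:Z) - (tadj u v)%:Z.

Definition inLambda d h (x : tvert d h -> int) : Prop :=
  exists c : tvert d h -> int, forall j, x j = \sum_(i : tvert d h) c i * tDelta i j.

Definition stdvec d h (i : tvert d h) : tvert d h -> int := fun j => (i == j)%:Z.

Definition order_in_G d h (x : tvert d h -> int) (n : nat) : Prop :=
  (0 < n)%N /\ inLambda (fun j => n%:Z * x j) /\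
  forall m : nat, (0 < m < n)%N -> ~ inLambda (fun j => m%:Z * x j).

From mathcomp Require Import all_boot all_order all_algebra.
From mathcomp Require Import zify ring.
Set Implicit Arguments. Unset Strict Implicit. Unset Printing Implicit Defensive.
Import Order.TTheory GRing.Theory Num.Theory.
Local Open Scope ring_scope.

(* Write q = d - 1 and p(v) = 1 + q + ... + q^(h - depth v).  Then p is harmonic
   (d p(v) is the sum of p over the neighbours of v) at every vertex except the
   root, where the defect is d q^h; that is, p Delta = d q^h x_0.  Conversely,
   Delta has trivial left kernel by the maximum principle: the maximum of a
   harmonic function propagates from parent to child down to a leaf, where
   harmonicity forces it to be <= 0.  So if m x_0 = c Delta, then
   d q^h c = m p, and evaluating at a leaf, where p = 1, gives d q^h | m. *)

Section SeqSubSums.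

Variables (T : choiceType) (s : seq T) (R : nmodType).

Lemma big_seq_sub_cond (P : pred T) (r : seq T) (F : T -> R) :
  uniq r -> r =i [pred x | P x && (x \in s)] ->
  \sum_(i : seq_sub s | P (ssval i)) F (ssval i) = \sum_(x <- r) F x.
Proof.
move=> r_uniq r_def.
have r_perm : perm_eq r [seq ssval i | i <- enum {: seq_sub s} & P (ssval i)].
  apply: uniq_perm => //.
    by rewrite (map_inj_uniq val_inj) filter_uniq ?enum_uniq.
  move=> x; rewrite r_def inE; apply/andP/mapP => [[Px sx]|[i]].
    by exists (SeqSub sx); rewrite // mem_filter Px mem_enum.
  by rewrite mem_filter => /andP[Pi _] ->; rewrite Pi ssvalP.
by rewrite (perm_big _ r_perm) big_map big_filter big_enum_cond.
Qed.

End SeqSubSums.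

Definition tpath (d : nat) (s : seq nat) : bool :=
  if s is a :: t then (a < d)%N && all (fun b => b < d.-1)%N t else true.

Definition nchildren (d : nat) (s : seq nat) : nat :=
  if s is [::] then d else d.-1.

Definition parent (s : seq nat) : seq nat := take (size s).-1 s.

Lemma mem_allpairs_cons (T : eqType) (A : seq T) (B : seq (seq T)) s :
  (s \in [seq a :: t | a <- A, t <- B]) =
  (if s is a :: t then (a \in A) && (t \in B) else false).
Proof.
apply/allpairsP/idP => [[[a t] /= [Aa Bt ->]] | ]; first by rewrite Aa Bt.
by case: s => [//|a t] /andP[Aa Bt]; exists (a, t).
Qed.

Lemma mem_tpaths c k s :
  (s \in tpaths c k) = (size s <= k)%N && all (fun b => b < c)%N s.
Proof.
elim: k s => [|k IHk] [|a t] //=.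
by rewrite in_cons mem_allpairs_cons mem_iota add0n IHk ltnS andbCA andbA.
Qed.

Lemma mem_tree_vertices d h s :
  (s \in tree_vertices d h) = (size s <= h)%N && tpath d s.
Proof.
case: h => [|h]; case: s => [|a t] //=.
by rewrite in_cons mem_allpairs_cons mem_iota add0n mem_tpaths ltnS andbCA andbA.
Qed.

Lemma tpath_rcons d s a : tpath d (rcons s a) = tpath d s && (a < nchildren d s)%N.
Proof.
case: s => [|b t] /=; first exact: andbT.
by rewrite all_rcons -andbA (andbC (a < _)%N).
Qed.

Lemma nchildren_gt0 d s : (1 < d)%N -> (0 < nchildren d s)%N.
Proof. by case: s => [|? ?] /=; lia. Qed.

Lemma nchildrenE d s : (0 < d)%N ->
  (nchildren d s)%:Z = if s == [::] then d%:Z else d%:Z - 1.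
Proof. by case: s => [|? ?] d_gt0 //=; rewrite predn_int. Qed.

Lemma size_parent s : size (parent s) = (size s).-1.
Proof. by rewrite size_takel // leq_pred. Qed.

Lemma parent_rcons s (a : nat) : parent (rcons s a) = s.
Proof. by rewrite /parent size_rcons -cats1 (take_size_cat _ erefl). Qed.

Lemma tparentP s t : reflect (exists a, t = rcons s a) (tparent s t).
Proof.
apply: (iffP andP) => [[]|[a ->]]; last first.
  by rewrite size_rcons -cats1 (take_size_cat _ erefl).
case/lastP: t => [//|t a]; rewrite size_rcons eqSS -cats1 => /eqP st.
by rewrite (take_size_cat _ st) => /eqP <-; exists a; rewrite cats1.
Qed.

Lemma mem_tree_vertices_parent d h s :
  s \in tree_vertices d h -> parent s \in tree_vertices d h.
Proof.
case/lastP: s => [//|p a]; rewrite !mem_tree_vertices parent_rcons size_rcons tpath_rcons.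
by case/andP=> /ltnW -> /andP[].
Qed.

Lemma mem_tree_vertices_child d h s a :
  s \in tree_vertices d h -> (size s < h)%N -> (a < nchildren d s)%N ->
  rcons s a \in tree_vertices d h.
Proof.
by rewrite !mem_tree_vertices size_rcons tpath_rcons => /andP[_ ->] -> ->.
Qed.

Definition neighbour_sum (d h : nat) (F : seq nat -> int) (s : seq nat) : int :=
  (if s == [::] then 0 else F (parent s))
  + (if (size s < h)%N then \sum_(a < nchildren d s) F (rcons s a) else 0).

Section Laplacian.

Variables (d h : nat).

Lemma sum_parents (F : seq nat -> int) s : s \in tree_vertices d h ->
  \sum_(i : tvert d h | tparent (ssval i) s) F (ssval i)
  = if s == [::] then 0 else F (parent s).
Proof.
rewrite mem_tree_vertices; case/lastP: s => [_|p a].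
  by rewrite (big_seq_sub_cond (s := tree_vertices d h) (P := tparent^~ [::])
                (r := [::])) ?big_nil.
rewrite size_rcons tpath_rcons => /andP[hp /andP[pp _]].
rewrite (big_seq_sub_cond (s := tree_vertices d h) (P := tparent^~ (rcons p a))
           (r := [:: p])) //.
  by rewrite big_seq1 -size_eq0 size_rcons parent_rcons.
move=> x; rewrite mem_seq1 /=; apply/eqP/andP => [->|[/tparentP[b]]].
  by split; [apply/tparentP; exists a | rewrite mem_tree_vertices ltnW ?pp].
by move/eqP; rewrite eqseq_rcons => /andP[/eqP].
Qed.

Lemma sum_children (F : seq nat -> int) s : s \in tree_vertices d h ->
  \sum_(i : tvert d h | tparent s (ssval i)) F (ssval i)
  = if (size s < h)%N then \sum_(a < nchildren d s) F (rcons s a) else 0.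
Proof.
rewrite mem_tree_vertices => /andP[_ ps]; case: ltnP => [hs|hs]; last first.
  rewrite (big_seq_sub_cond (s := tree_vertices d h) (P := tparent s) (r := [::]))
    ?big_nil // => x /=.
  apply/esym/andP => -[/tparentP[a ->]].
  by rewrite mem_tree_vertices size_rcons ltnNge hs.
rewrite (big_seq_sub_cond (s := tree_vertices d h) (P := tparent s)
           (r := [seq rcons s a | a <- iota 0 (nchildren d s)])).
- by rewrite big_map -(big_mkord xpredT (fun a => F (rcons s a))) /index_iota subn0.
- by rewrite (map_inj_uniq (@rcons_injr _ s)) iota_uniq.
move=> x /=; apply/mapP/andP => [[a]|[/tparentP[a ->]]].
  rewrite mem_iota add0n => an ->; split; first by apply/tparentP; exists a.
  by rewrite mem_tree_vertices size_rcons hs tpath_rcons ps.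
rewrite mem_tree_vertices tpath_rcons => /andP[_ /andP[_ an]].
by exists a; rewrite // mem_iota add0n.
Qed.

Lemma sum_tDelta (F : seq nat -> int) (j : tvert d h) :
  \sum_i F (ssval i) * tDelta i j
  = d%:Z * F (ssval j) - neighbour_sum d h F (ssval j).
Proof.
have sum_ind (P : pred (tvert d h)) :
    \sum_i F (ssval i) * (P i)%:Z = \sum_(i | P i) F (ssval i).
  by rewrite [RHS]big_mkcond; apply: eq_bigr => i _; case: (P i); rewrite ?mulr1 ?mulr0.
have tadjE i :
    (tadj i j)%:Z = (tparent (ssval i) (ssval j))%:Z + (tparent (ssval j) (ssval i))%:Z.
  rewrite /tadj; case/boolP: (tparent _ _) => [/andP[/eqP ij _]|_].
    by rewrite {2}/tparent ij; case: eqP => //; lia.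
  by case: (tparent _ _).
under eq_bigr => i _ do rewrite /tDelta tadjE mulrBr mulrDr mulrCA.
rewrite sumrB big_split -mulr_sumr !sum_ind big_pred1_eq.
by rewrite sum_parents ?sum_children ?ssvalP.
Qed.

End Laplacian.

Section MaximumPrinciple.

Variables (d h : nat) (F : seq nat -> int).
Hypothesis d_gt1 : (1 < d)%N.
Hypothesis F_harmonic : forall s, s \in tree_vertices d h ->
  d%:Z * F s = neighbour_sum d h F s.

Local Notation V := (tree_vertices d h).

Lemma harmonic_max_child s : s \in V -> (forall t, t \in V -> F t <= F s) ->
  (size s < h)%N -> F (rcons s 0%N) = F s.
Proof.
move=> sV Fmax hs; have := F_harmonic sV; rewrite /neighbour_sum hs.
have n_gt0 := nchildren_gt0 s d_gt1.
have child_le : F s - F (rcons s 0%N) <= \sum_(a < nchildren d s) (F s - F (rcons s a)).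
  rewrite (bigD1 (Ordinal n_gt0)) //= lerDl sumr_ge0 // => a _.
  by rewrite subr_ge0 Fmax // mem_tree_vertices_child.
have parent_le := Fmax _ (mem_tree_vertices_parent sV).
have child0_le := Fmax _ (mem_tree_vertices_child sV hs n_gt0).
move: child_le; rewrite sumrB sumr_const card_ord -mulr_natr natz nchildrenE 1?ltnW //.
set C := \sum_(a < nchildren d s) F (rcons s a).
by case: eqP => _; nia.
Qed.

Lemma harmonic_max_leaf s : s \in V -> (forall t, t \in V -> F t <= F s) ->
  ~~ (size s < h)%N -> F s <= 0.
Proof.
move=> sV Fmax /negbTE hs; have := F_harmonic sV; rewrite /neighbour_sum hs addr0.
have parent_le := Fmax _ (mem_tree_vertices_parent sV).
by case: eqP => _; nia.
Qed.

Lemma harmonic_le0 s : s \in V -> F s <= 0.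
Proof.
have [v _ vmax] := arg_maxP (fun i : tvert d h => F (ssval i)) (isT : xpredT (troot d h)).
have Fmax t : t \in V -> F t <= F (ssval v) by move=> tV; exact: (vmax (SeqSub tV)).
suff max_le0 : F (ssval v) <= 0 by move=> sV; exact: le_trans (Fmax s sV) max_le0.
have descend k t : (h - size t)%N = k -> t \in V ->
    (forall u, u \in V -> F u <= F t) -> F t <= 0.
  elim: k t => [|k IHk] t hk tV tmax.
    by apply: harmonic_max_leaf => //; rewrite -leqNgt -subn_eq0 hk.
  have ht : (size t < h)%N by rewrite -subn_gt0 hk.
  have child_eq := harmonic_max_child tV tmax ht.
  rewrite -child_eq; apply: IHk; rewrite ?child_eq //.
    by rewrite size_rcons subnS hk.
  exact: mem_tree_vertices_child (nchildren_gt0 t d_gt1).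
exact: descend erefl (ssvalP v) Fmax.
Qed.

End MaximumPrinciple.

Lemma tDelta_left_kernel d h (y : tvert d h -> int) : (1 < d)%N ->
  (forall j, \sum_i y i * tDelta i j = 0) -> forall i, y i = 0.
Proof.
move=> d_gt1 y_ker.
have ker_le0 (z : tvert d h -> int) :
    (forall j, \sum_i z i * tDelta i j = 0) -> forall i, z i <= 0.
  move=> z_ker i; pose F s := z (insubd (troot d h) s).
  have zF k : z k = F (ssval k) by rewrite /F valKd.
  rewrite zF; apply: (harmonic_le0 d_gt1) (ssvalP i) => s sV; apply/eqP.
  have := z_ker (SeqSub sV); under eq_bigr => k _ do rewrite zF.
  by rewrite sum_tDelta => /eqP; rewrite subr_eq0.
move=> i; apply/eqP; rewrite eq_le ker_le0 //= -oppr_le0.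
apply: (ker_le0 (fun k => - y k)) => j.
by under eq_bigr => k _ do rewrite mulNr; rewrite sumrN y_ker oppr0.
Qed.

Fixpoint geom (q : int) (n : nat) : int :=
  if n is n'.+1 then 1 + q * geom q n' else 1.

Lemma geomS_sub q n : geom q n.+1 - geom q n = q ^+ n.+1.
Proof. by elim: n => [|n IHn] /=; [ring | rewrite exprS -IHn /=; ring]. Qed.

Definition root_potential (d h : nat) (s : seq nat) : int :=
  geom (d%:Z - 1) (h - size s).

Lemma root_potential_harmonic d h s : (0 < d)%N -> s \in tree_vertices d h ->
  d%:Z * root_potential d h s - neighbour_sum d h (root_potential d h) s
  = d%:Z * (d%:Z - 1) ^+ h * (s == [::])%:Z.
Proof.
move=> d_gt0 sV; rewrite /neighbour_sum.
under eq_bigr => a _ do rewrite /root_potential size_rcons.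
rewrite sumr_const card_ord -mulr_natr natz nchildrenE // /root_potential size_parent.
move: sV; rewrite mem_tree_vertices; case: s => [_|b t /= /and3P[ht _ _]] /=.
  by case: h => [|h] /=; [ring | rewrite subn1 /= -(geomS_sub _ h) /=; ring].
set k := size t in ht *; case: ltnP => [lt_th | ge_th]; last first.
  have -> : (h - k.+1)%N = 0%N by lia.
  have -> : (h - k)%N = 1%N by lia.
  by rewrite /= addr0; ring.
have -> : (h - k)%N = (h - k.+2).+2 by lia.
have -> : (h - k.+1)%N = (h - k.+2).+1 by lia.
by rewrite /=; ring.
Qed.

Lemma Posz_mul_predn_exp d h : (0 < d)%N ->
  (d * (d - 1) ^ h)%N%:Z = d%:Z * (d%:Z - 1) ^+ h.
Proof.
by move=> d_gt0; rewrite PoszM; congr (_ * _); rewrite -natz natrX natz -subzn.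
Qed.

Lemma troot_eqE d h (j : tvert d h) : (troot d h == j) = (ssval j == [::]).
Proof. by rewrite -val_eqE eq_sym. Qed.

Lemma mem_tree_vertices_nseq d h : (1 < d)%N -> nseq h 0%N \in tree_vertices d h.
Proof.
move=> d_gt1; rewrite mem_tree_vertices size_nseq leqnn.
case: h => [|h] //=; rewrite (ltnW d_gt1); apply/allP => b /nseqP[-> _]; lia.
Qed.

Lemma inLambda_root_order d h : (0 < d)%N ->
  inLambda (fun j => (d * (d - 1) ^ h)%N%:Z * stdvec (troot d h) j).
Proof.
move=> d_gt0; exists (fun i => root_potential d h (ssval i)) => j.
rewrite sum_tDelta root_potential_harmonic ?ssvalP //.
by rewrite /stdvec troot_eqE Posz_mul_predn_exp.
Qed.

Lemma dvdn_of_inLambda_root d h m : (1 < d)%N ->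
  inLambda (fun j => m%:Z * stdvec (troot d h) j) -> (d * (d - 1) ^ h %| m)%N.
Proof.
move=> d_gt1 [c c_def]; set N := (d * (d - 1) ^ h)%N.
have d_gt0 := ltnW d_gt1.
pose leaf : tvert d h := SeqSub (mem_tree_vertices_nseq h d_gt1).
pose y i := N%:Z * c i - m%:Z * root_potential d h (ssval i).
have y_ker j : \sum_i y i * tDelta i j = 0.
  under eq_bigr => i _ do rewrite mulrBl -!mulrA.
  rewrite sumrB -!mulr_sumr -c_def sum_tDelta root_potential_harmonic ?ssvalP //.
  by rewrite /stdvec troot_eqE /N Posz_mul_predn_exp //; ring.
have := tDelta_left_kernel d_gt1 y_ker leaf.
rewrite /y /root_potential /= size_nseq subnn /= mulr1 => /eqP.
rewrite subr_eq0 => /eqP m_eq.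
have : (N%:Z %| m%:Z)%Z by apply/dvdzP; exists (c leaf); rewrite -m_eq mulrC.
by rewrite dvdzE.
Qed.

Theorem proposition7p2 (d h : nat) :
  (3 <= d)%N -> (1 <= h)%N ->
  order_in_G (stdvec (troot d h)) (d * (d - 1) ^ h)%N.
Proof.
move=> d_ge3 _; have d_gt1 : (1 < d)%N by lia.
split; [|split].
- by rewrite muln_gt0 expn_gt0 subn_gt0 d_gt1 ltnW.
- exact: inLambda_root_order (ltnW d_gt1).
- move=> m /andP[m_gt0 m_lt] /(dvdn_of_inLambda_root d_gt1) /(dvdn_leq m_gt0).
  by rewrite leqNgt m_lt.
Qed.
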